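(* Consider any sequences evolved by Algorithm 2, let $d_0:=\|x^0-x^*\|>0$ and $C:=\lambda_1^{\frac{p-1}{p+1}}\theta^{\frac{2}{p+1}}(1-\sigma^2)^{\frac{p-1}{p+1}}$. Then for all $k\ge0$, $A_{k+1}\ge\lambda_1\Big(1+\frac{2\mu C}{d_0^{2(p-1)/(p+1)}}\,k^{\frac{p-1}{p+1}}\Big)^k$.
   Context: Setting: $\mathcal H$ is a finite-dimensional real inner product space with inner product $\langle\cdot,\cdot\rangle$ and norm $\|\cdot\|$. $f,g:\mathcal H\to(-\infty,\infty]$ are proper, closed, convex functions, $h:=f+g$ has nonempty domain, and $g$ is $\mu$-strongly convex for some $\mu>0$, i.e. $g(tx+(1-t)y)\le tg(x)+(1-t)g(y)-\frac{\mu}{2}t(1-t)\|x-y\|^2$ for all $x,y\in\mathcal H$, $t\in[0,1]$. $x^*$ denotes the unique minimizer of $h$. For $\varepsilon\ge 0$, $\partial_\varepsilon f(y):=\{u\in\mathcal H: f(w)\ge f(y)+\langle u,w-y\rangle-\varepsilon\ \forall w\in\mathcal H\}$, and $\partial g:=\partial_0 g$. Algorithm 2: Choose $x^0,y^0\in\mathcal H$, $\sigma\in[0,1)$, $p\ge2$ and $\theta>0$, and set $A_0=0$. For $k=0,1,2,\dots$: choose $\lambda_{k+1}>0$, set $a_{k+1}=\frac{(1+2\mu A_k)\lambda_{k+1}+\sqrt{(1+2\mu A_k)^2\lambda_{k+1}^2+4(1+\mu A_k)A_k\lambda_{k+1}}}{2}$ and $\tilde x^k=\frac{a_{k+1}-\mu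 A_k\lambda_{k+1}}{A_k+a_{k+1}}x^k+\frac{A_k+\mu A_k\lambda_{k+1}}{A_k+a_{k+1}}y^k$; compute $(y^{k+1},v^{k+1},\varepsilon_{k+1})\in\mathcal H\times\mathcal H\times[0,\infty)$ such that $v^{k+1}\in\partial_{\varepsilon_{k+1}}f(y^{k+1})+\partial g(y^{k+1})$, $\frac{\|\lambda_{k+1}v^{k+1}+y^{k+1}-\tilde x^k\|^2}{1+\lambda_{k+1}\mu}+2\lambda_{k+1}\varepsilon_{k+1}\le\sigma^2\|y^{k+1}-\tilde x^k\|^2$, and $\lambda_{k+1}\|y^{k+1}-\tilde x^k\|^{p-1}\ge\theta$; then set $A_{k+1}=A_k+a_{k+1}$ and $x^{k+1}=\frac{1+\mu A_k}{1+\mu A_{k+1}}x^k+\frac{\mu a_{k+1}}{1+\mu A_{k+1}}y^{k+1}-\frac{a_{k+1}}{1+\mu A_{k+1}}v^{k+1}$. ''Sequences evolved by Algorithm 2'' means any sequences satisfying all these relations for every $k\ge 0$. *)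

From HB Require Import structures.
From mathcomp Require Import all_boot all_order all_algebra.
From mathcomp Require Import all_classical all_reals all_analysis.
Set Implicit Arguments. Unset Strict Implicit. Unset Printing Implicit Defensive.
Import Order.TTheory GRing.Theory Num.Theory.
Import numFieldNormedType.Exports.
Local Open Scope ring_scope.
Local Open Scope ereal_scope.

(* The finite-dimensional real inner product space H is modelled as
   'rV[R]_n with the Euclidean inner product. *)
Definition ip {R : realType} {n : nat} (u v : 'rV[R]_n) : R :=
  \sum_(i < n) u ord0 i * v ord0 i.

Definition nrm {R : realType} {n : nat} (u : 'rV[R]_n) : R :=
  Num.sqrt (ip u u).

Definition proper_fun {R : realType} {n : nat} (f : 'rV[R]_n -> \bar R) : Prop :=
  (forall x, f x != -oo) /\ (exists x, f x \is a fin_num).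

Definition closed_fun {R : realType} {n : nat} (f : 'rV[R]_n -> \bar R) : Prop :=
  lower_semicontinuous f.

Definition convex_fun {R : realType} {n : nat} (f : 'rV[R]_n -> \bar R) : Prop :=
  forall x y (t : R), (0 <= t <= 1)%R ->
    f (t *: x + (1 - t) *: y)%R <= t%:E * f x + (1 - t)%:E * f y.

Definition strongly_convex {R : realType} {n : nat} (mu : R)
    (g : 'rV[R]_n -> \bar R) : Prop :=
  forall x y (t : R), (0 <= t <= 1)%R ->
    g (t *: x + (1 - t) *: y)%R <=
      t%:E * g x + (1 - t)%:E * g y
      - (mu / 2 * t * (1 - t) * nrm (x - y) ^+ 2)%R%:E.

Definition eps_subdiff {R : realType} {n : nat} (eps : R)
    (f : 'rV[R]_n -> \bar R) (y : 'rV[R]_n) (u : 'rV[R]_n) : Prop :=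
  forall w, f w >= f y + (ip u (w - y))%R%:E - eps%:E.

Definition subdiff {R : realType} {n : nat}
    (g : 'rV[R]_n -> \bar R) (y : 'rV[R]_n) (u : 'rV[R]_n) : Prop :=
  eps_subdiff 0 g y u.

Definition algorithm2 {R : realType} {n : nat}
    (f g : 'rV[R]_n -> \bar R) (mu sigma p theta : R)
    (lam A a : nat -> R) (x xt y v : nat -> 'rV[R]_n) (eps : nat -> R) : Prop :=
  (0 <= sigma < 1)%R /\ (2 <= p)%R /\ (0 < theta)%R /\ A 0%N = 0%R /\
  forall k : nat,
    (0 < lam k.+1)%R /\
        a k.+1 = (((1 + 2 * mu * A k) * lam k.+1
                  + Num.sqrt ((1 + 2 * mu * A k) ^+ 2 * lam k.+1 ^+ 2
                              + 4 * (1 + mu * A k) * A k * lam k.+1)) / 2)%R /\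
        xt k = ((a k.+1 - mu * A k * lam k.+1) / (A k + a k.+1) *: x k
               + (A k + mu * A k * lam k.+1) / (A k + a k.+1) *: y k)%R /\
        (exists u1 u2, v k.+1 = (u1 + u2)%R /\
            eps_subdiff (eps k.+1) f (y k.+1) u1 /\ subdiff g (y k.+1) u2) /\
        (0 <= eps k.+1)%R /\
        (nrm (lam k.+1 *: v k.+1 + y k.+1 - xt k) ^+ 2 / (1 + lam k.+1 * mu)
           + 2 * lam k.+1 * eps k.+1 <= sigma ^+ 2 * nrm (y k.+1 - xt k) ^+ 2)%R /\
        (lam k.+1 * (nrm (y k.+1 - xt k)) `^ (p - 1) >= theta)%R /\
        A k.+1 = (A k + a k.+1)%R /\
        x k.+1 = ((1 + mu * A k) / (1 + mu * A k.+1) *: x k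
                 + (mu * a k.+1) / (1 + mu * A k.+1) *: y k.+1
                 - a k.+1 / (1 + mu * A k.+1) *: v k.+1)%R.

From HB Require Import structures.
From mathcomp Require Import all_boot all_order all_algebra.
From mathcomp Require Import all_classical all_reals all_analysis.
From mathcomp Require Import ring lra.
Import Order.TTheory GRing.Theory Num.Theory.
Local Open Scope ring_scope.
Set Implicit Arguments.
Unset Strict Implicit.

(* The proof has an optimization half and an inequality half.
   - Optimization: with h = f + g and xstar its minimizer, the potential
       P_k = A_k (h(y_k) - h(xstar)) + (1 + mu A_k)/2 * |x_k - xstar|^2
     satisfies P_{k+1} + c_k <= P_k, where
       c_k = A_{k+1}/(2 lam_{k+1}) (1 - sigma^2) |y_{k+1} - xt_k|^2.
     This combines the eps-subgradient inequality for f, the strong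
     subgradient inequality for g, the relative-error criterion and an
     exact algebraic identity (estimate_sequence_step) coming from the
     quadratic equation that defines a_{k+1}.  Telescoping gives
     sum_j c_{j+1} <= d0^2 / 2, and since A_{j+1} >= lam_1 this bounds a
     weighted sum of the |y_{j+1} - xt_j|^2.
   - Inequalities: a_{k+1} >= (1 + 2 mu A_k) lam_{k+1} gives
     A_{k+1} >= lam_1 prod_j (1 + 2 mu lam_{j+2}).  The large-step
     condition turns the bounded sum into a bound on sum_j lam_{j+2}^-q,
     q = (p+1)/(p-1); the AM-GM inequality converts it into a lower bound
     on prod_j lam_{j+2}, and a Mahler-type inequality
     prod (1 + X_i) >= (1 + (prod X_i)^(1/k))^k concludes. *)

Section InnerProduct.
Variables (R : realType) (n : nat).
Implicit Types u w : 'rV[R]_n.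

Lemma ip_ge0 u : 0 <= ip u u.
Proof. by apply: sumr_ge0 => i _; rewrite -expr2 sqr_ge0. Qed.

Lemma nrm_sqr u : nrm u ^+ 2 = ip u u.
Proof. by rewrite /nrm sqr_sqrtr // ip_ge0. Qed.

Lemma nrm_ge0 u : 0 <= nrm u.
Proof. exact: sqrtr_ge0. Qed.

Lemma ipDl u1 u2 w : ip (u1 + u2) w = ip u1 w + ip u2 w.
Proof. by rewrite /ip -big_split; apply: eq_bigr => i _; rewrite mxE mulrDl. Qed.

Lemma ipZr u w (t : R) : ip u (t *: w) = t * ip u w.
Proof. by rewrite /ip mulr_sumr; apply: eq_bigr => i _; rewrite mxE; ring. Qed.

End InnerProduct.

Section Subgradients.
Variables (R : realType) (n : nat).
Implicit Types (u w y : 'rV[R]_n) (h : 'rV[R]_n -> \bar R).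

Lemma le_of_forall_shrink (X c : R) :
  (forall t, 0 < t < 1 -> (1 - t) * c <= X) -> c <= X.
Proof.
move=> H; rewrite leNgt; apply/negP => Xc.
have [c0|c0] := lerP c 0; first by have := H (1/2) ltac:(lra); nra.
pose t := (c - X) / (c - X + c).
have d0 : 0 < c - X + c by lra.
have t0 : 0 < t by apply: divr_gt0; lra.
have t1 : t < 1 by rewrite /t ltr_pdivrMr //; lra.
have := H t ltac:(lra).
have -> : (1 - t) * c = c * c / (c - X + c) by rewrite /t; field; lra.
rewrite ler_pdivrMr //; nra.
Qed.

Lemma fin_num_of_eps_subdiff h e y u w :
  (forall z, h z != -oo)%E -> eps_subdiff e h y u -> h w \is a fin_num ->
  h y \is a fin_num.
Proof.
move=> hn hs hw; have := hs w; move: (hn y).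
case: (h y) => [r| |] //= _.
by move: hw; case: (h w).
Qed.

Lemma eps_subdiff_fine h e y u w :
  eps_subdiff e h y u -> h w \is a fin_num -> h y \is a fin_num ->
  fine (h y) + ip u (w - y) - e <= fine (h w).
Proof.
move=> hs hw hy; have := hs w.
by rewrite -(fineK hw) -(fineK hy) /= -EFinD lee_fin.
Qed.

(* A subgradient of a mu-strongly convex function gives a quadratic
   lower bound: compare g on the segment [y, w] with its subgradient
   bound and let the segment parameter tend to 0. *)
Lemma strong_subgrad_ineq (mu : R) (g : 'rV[R]_n -> \bar R) y u w :
  strongly_convex mu g -> subdiff g y u ->
  g w \is a fin_num -> g y \is a fin_num ->
  fine (g y) + ip u (w - y) + mu / 2 * nrm (w - y) ^+ 2 <= fine (g w).
Proof.
move=> sc hs hw hy.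
suff : mu / 2 * nrm (w - y) ^+ 2 <= fine (g w) - fine (g y) - ip u (w - y) by lra.
apply: le_of_forall_shrink => t /andP[t0 t1].
have conv := sc w y t ltac:(apply/andP; split; lra).
have sub := hs (t *: w + (1 - t) *: y).
have seg : t *: w + (1 - t) *: y - y = t *: (w - y).
  by apply/rowP => i; rewrite !mxE; ring.
move: sub; rewrite seg ipZr sube0 => sub.
move: (le_trans sub conv).
rewrite -(fineK hw) -(fineK hy) /= -!EFinM -!EFinD ?EFinB lee_fin => le_t.
have : t * ((1 - t) * (mu / 2 * nrm (w - y) ^+ 2)) <=
       t * (fine (g w) - fine (g y) - ip u (w - y)) by lra.
by rewrite ler_pM2l.
Qed.

Lemma fin_num_of_sum_le (e1 e2 e3 : \bar R) :
  e1 != -oo%E -> e2 != -oo%E -> (e1 + e2 <= e3)%E ->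
  e3 \is a fin_num -> e1 \is a fin_num /\ e2 \is a fin_num.
Proof. by case: e1 => [r||]; case: e2 => [r'||]; case: e3 => [r''||]. Qed.

End Subgradients.

(* The step a_{k+1} of Algorithm 2 is the positive root of
   a^2 = lam ((1 + 2 mu A) a + (1 + mu A) A); in particular a >= (1 + 2 mu A) lam. *)
Lemma step_size_spec (R : realType) (A lam mu a : R) :
  0 <= A -> 0 < lam -> 0 < mu ->
  a = (((1 + 2 * mu * A) * lam
        + Num.sqrt ((1 + 2 * mu * A) ^+ 2 * lam ^+ 2
                    + 4 * (1 + mu * A) * A * lam)) / 2) ->
  [/\ 0 < a, a ^+ 2 = lam * ((1 + 2 * mu * A) * a + (1 + mu * A) * A)
     & (1 + 2 * mu * A) * lam <= a].
Proof.
move=> A0 l0 m0 ->.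
set B := (1 + 2 * mu * A) * lam.
set disc := (1 + 2 * mu * A) ^+ 2 * lam ^+ 2 + 4 * (1 + mu * A) * A * lam.
have mA : 0 <= mu * A by apply: mulr_ge0; lra.
have B0 : 0 < B by apply: mulr_gt0 => //; lra.
have c0 : 0 <= 4 * (1 + mu * A) * A * lam.
  by apply: mulr_ge0; [apply: mulr_ge0 => //; apply: mulr_ge0|]; lra.
have disc0 : 0 <= disc.
  by rewrite /disc; have := sqr_ge0 B; rewrite exprMn; lra.
set s := Num.sqrt disc.
have s0 : 0 <= s by apply: sqrtr_ge0.
have s2 : s ^+ 2 = disc by rewrite sqr_sqrtr.
have sB : B <= s.
  have : B ^+ 2 <= s ^+ 2 by rewrite s2 /disc /B exprMn; lra.
  by rewrite ler_sqr // ?nnegrE; lra.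
split; [lra | | lra].
apply/eqP; rewrite -subr_eq0.
have -> : ((B + s) / 2) ^+ 2 - lam * ((1 + 2 * mu * A) * ((B + s) / 2) + (1 + mu * A) * A)
   = (s ^+ 2 - disc) / 4 by rewrite /B /disc; field.
by rewrite s2 subrr mul0r.
Qed.

(* The slack is the
   nonnegative multiple K |x - yk|^2, so the proof is an exact identity. *)
Lemma estimate_sequence_step (R : realType) (n : nat) (A a lam mu : R)
    (x yk yp v xs xt xn : 'rV[R]_n) :
  0 < lam -> 0 < mu -> 0 <= A -> 0 < a ->
  a ^+ 2 = lam * ((1 + 2 * mu * A) * a + (1 + mu * A) * A) ->
  xt = ((a - mu * A * lam) / (A + a)) *: x + ((A + mu * A * lam) / (A + a)) *: yk ->
  xn = ((1 + mu * A) / (1 + mu * (A + a))) *: x + (mu * a / (1 + mu * (A + a))) *: yp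
       - (a / (1 + mu * (A + a))) *: v ->
  (1 + mu * (A + a)) / 2 * nrm (xn - xs) ^+ 2 + (A + a) / (2 * lam) * nrm (yp - xt) ^+ 2 <=
  (1 + mu * A) / 2 * nrm (x - xs) ^+ 2 + A * ip v (yk - yp) + a * ip v (xs - yp)
   + (A + a) / (2 * lam) * (nrm (lam *: v + yp - xt) ^+ 2 / (1 + lam * mu))
   + A * mu / 2 * nrm (yk - yp) ^+ 2 + a * mu / 2 * nrm (xs - yp) ^+ 2.
Proof.
move=> l0 m0 A0 a0 ha Ext Exn.
have aB : (1 + 2 * mu * A) * lam <= a.
  have : a * ((1 + 2 * mu * A) * lam) <= a * a.
    rewrite -expr2 ha.
    have := mulr_ge0 (ltW l0) (mulr_ge0 (ltac:(nra) : 0 <= 1 + mu * A) A0); nra.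
  by rewrite ler_pM2l.
set K := mu * (a - mu * A * lam) * (A + mu * A * lam) / (2 * (1 + lam * mu) * (A + a)).
have K0 : 0 <= K.
  have mA : 0 <= mu * A by apply: mulr_ge0; lra.
  have mAl : 0 <= mu * A * lam by apply: mulr_ge0; lra.
  have : mu * A * lam <= (1 + 2 * mu * A) * lam by rewrite ler_pM2r //; lra.
  move=> le_muAl; rewrite /K; apply: divr_ge0.
    by apply: mulr_ge0; [apply: mulr_ge0|]; lra.
  by apply: mulr_ge0; [apply: mulr_ge0|]; nra.
rewrite -subr_ge0.
set rhs := (X in X - _).
have -> : rhs - ((1 + mu * (A + a)) / 2 * nrm (xn - xs) ^+ 2
                 + (A + a) / (2 * lam) * nrm (yp - xt) ^+ 2)
          = \sum_(i < n) K * (x ord0 i - yk ord0 i) ^+ 2.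
  rewrite /rhs !nrm_sqr /ip !mulr_sumr !mulr_suml !mulr_sumr -!big_split /= -sumrB.
  apply: eq_bigr => i _; rewrite Ext Exn !mxE /K.
  have D0 : 0 < (1 + 2 * mu * A) * a + (1 + mu * A) * A.
    have : 0 <= (1 + mu * A) * A by apply: mulr_ge0 => //; nra.
    have : 0 < (1 + 2 * mu * A) * a by apply: mulr_gt0 => //; nra.
    lra.
  have El : lam = a ^+ 2 / ((1 + 2 * mu * A) * a + (1 + mu * A) * A).
    by rewrite ha mulfK // gt_eqF.
  move: (x ord0 i) (xs ord0 i) (yk ord0 i) (yp ord0 i) (v ord0 i) => X Xs Yk Yp V.
  move: D0; rewrite El => D0.
  field.
  have : 0 <= a ^+ 2 * mu by apply: mulr_ge0; [apply: sqr_ge0|lra].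
  have : 0 <= mu * (A + a) by apply: mulr_ge0; lra.
  by move=> h3 h4; rewrite !gt_eqF //; lra.
by apply: sumr_ge0 => i _; apply: mulr_ge0 => //; apply: sqr_ge0.
Qed.

Section RateInequalities.
Variable R : realType.

Lemma prod_le_mean_pow (k : nat) (E : 'I_k -> R) : (forall i, 0 <= E i) ->
  \prod_i E i <= ((\sum_i E i) / k%:R) ^+ k.
Proof.
by move=> E0; have := (leif_AGM (A := 'I_k) (fun i _ => E0 i)).1; rewrite card_ord.
Qed.

Lemma powR_invn_expn (P : R) (k : nat) :
  (0 < k)%N -> 0 <= P -> (P `^ (k%:R^-1)) ^+ k = P.
Proof.
move=> k0 P0; rewrite -powR_mulrn ?powR_ge0 // -powRrM mulVf ?powRr1 //.
by rewrite pnatr_eq0 -lt0n.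
Qed.

(* With r the k-th root of prod (1 + X_i), AM-GM applied to the families
   1/(1 + X_i) and X_i/(1 + X_i), whose means add up to 1, gives
   1/r + g/r <= 1. *)
Lemma expn_le_prod_one_add (k : nat) (X : 'I_k -> R) (g : R) : (0 < k)%N ->
  (forall i, 0 <= X i) -> 0 <= g -> g ^+ k <= \prod_i X i ->
  (1 + g) ^+ k <= \prod_i (1 + X i).
Proof.
move=> k0 X0 g0 hg.
set P := \prod_i (1 + X i).
have P1 : 0 < P by apply: prodr_gt0 => i _; have := X0 i; lra.
set r := P `^ (k%:R^-1).
have rk : r ^+ k = P by apply: powR_invn_expn => //; lra.
have r0 : 0 < r by apply: powR_gt0.
have kR : 0 < k%:R :> R by rewrite ltr0n.
set m1 := (\sum_i (1 + X i)^-1) / k%:R.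
set m2 := (\sum_i (X i / (1 + X i))) / k%:R.
have m12 : m1 + m2 = 1.
  rewrite /m1 /m2 -mulrDl -big_split /= (eq_bigr (fun _ => 1)).
    by rewrite sumr_const card_ord mulfV // gt_eqF.
  move=> i _; have := X0 i => h.
  by rewrite -[X in X + _]mul1r -mulrDl mulfV // gt_eqF //; lra.
have le1 : r^-1 <= m1.
  have ri : 0 <= r^-1 by rewrite invr_ge0; lra.
  rewrite -(ler_pXn2r k0) ?nnegrE //; last first.
    by apply: divr_ge0; [apply: sumr_ge0 => i _; rewrite invr_ge0; have := X0 i|]; lra.
  rewrite exprVn rk /P -prodfV.
  by apply: prod_le_mean_pow => i; rewrite invr_ge0; have := X0 i; lra.
have le2 : g / r <= m2.
  have ri : 0 <= g / r by apply: divr_ge0; lra.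
  have E0 i : 0 <= X i / (1 + X i) by apply: divr_ge0; have := X0 i; lra.
  rewrite -(ler_pXn2r k0) ?nnegrE //; last first.
    by apply: divr_ge0; [apply: sumr_ge0 => i _|]; [exact: E0 | lra].
  apply: le_trans; last exact: prod_le_mean_pow E0.
  rewrite expr_div_n rk /P prodf_div; apply: ler_pM => //.
  - exact: exprn_ge0.
  - by rewrite invr_ge0; exact: ltW P1.
have : (1 + g) / r <= 1 by rewrite mulrDl mul1r; lra.
rewrite ler_pdivrMr // mul1r => h.
by rewrite -rk; apply: lerXn2r => //; rewrite nnegrE; lra.
Qed.

Lemma powRVx (x r : R) : 0 < x -> (x^-1) `^ r = (x `^ r)^-1.
Proof. by move=> x0; rewrite /powR invr_eq0 gt_eqF // lnV ?posrE // mulrN expRN. Qed.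

Lemma powR_prod (k : nat) (F : 'I_k -> R) (q : R) : (forall i, 0 <= F i) ->
  (\prod_i F i) `^ q = \prod_i (F i `^ q).
Proof.
elim: k F => [|k IH] F F0; first by rewrite !big_ord0 powR1.
by rewrite !big_ord_recr /= powRM ?IH //; exact: prodr_ge0.
Qed.

Lemma powR_Xn (x q : R) (k : nat) : 0 <= x -> (x ^+ k) `^ q = (x `^ q) ^+ k.
Proof.
move=> x0; rewrite -powR_mulrn // -powRrM mulrC powRrM powR_mulrn //.
exact: powR_ge0.
Qed.

Lemma powR_le_cancel (x y q : R) :
  0 < q -> 0 <= x -> 0 <= y -> x `^ q <= y `^ q -> x <= y.
Proof.
move=> q0 x0 y0 h.
have E z : 0 <= z -> z = (z `^ q) `^ q^-1.
  by move=> z0; rewrite -powRrM mulfV ?gt_eqF // powRr1.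
rewrite (E x) // (E y) //.
by apply: ge0_ler_powR => //; rewrite ?invr_ge0 ?nnegrE ?powR_ge0 //; lra.
Qed.

Lemma large_step_inv_pow (theta p lam N : R) :
  1 < p -> 0 < theta -> 0 < lam -> 0 <= N -> theta <= lam * N `^ (p - 1) ->
  theta `^ (2 / (p - 1)) * (lam `^ ((p + 1) / (p - 1)))^-1 <= N ^+ 2 / lam.
Proof.
move=> p1 t0 l0 N0 hth.
set r := 2 / (p - 1).
have r0 : 0 < r by apply: divr_gt0; lra.
have h1 : theta / lam <= N `^ (p - 1) by rewrite ler_pdivrMr // mulrC.
have h2 : (theta / lam) `^ r <= N ^+ 2.
  have -> : N ^+ 2 = (N `^ (p - 1)) `^ r.
    by rewrite -powRrM (_ : (p - 1) * r = 2%:R) ?powR_mulrn // /r; field; lra.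
  apply: ge0_ler_powR; rewrite ?nnegrE ?powR_ge0 //; first lra.
  by apply: divr_ge0; lra.
have -> : theta `^ r * (lam `^ ((p + 1) / (p - 1)))^-1 = (theta / lam) `^ r / lam.
  have -> : (p + 1) / (p - 1) = r + 1 by rewrite /r; field; lra.
  rewrite powRD; last by apply/implyP => _; rewrite gt_eqF.
  rewrite powRr1 ?(ltW l0) // powRM ?(ltW t0) ?invr_ge0 ?(ltW l0) //.
  by rewrite powRVx // invfM mulrA.
by apply: ler_wpM2r => //; rewrite invr_ge0 ltW.
Qed.

Lemma prod_ge_of_sum_inv_pow (k : nat) (lam : 'I_k -> R) (q D G : R) :
  (0 < k)%N -> 0 < q -> 0 < D -> 0 <= G -> (forall j, 0 < lam j) ->
  \sum_j (lam j `^ q)^-1 <= D -> G `^ q = k%:R / D ->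
  G ^+ k <= \prod_j lam j.
Proof.
move=> k0 q0 D0 G0 l0 hsum Gq.
have kR : 0 < k%:R :> R by rewrite ltr0n.
have s0 j : 0 <= (lam j `^ q)^-1 by rewrite invr_ge0 powR_ge0.
have prod_s : \prod_j (lam j `^ q)^-1 <= (D / k%:R) ^+ k.
  apply: le_trans; first exact: prod_le_mean_pow s0.
  apply: lerXn2r; rewrite ?nnegrE.
  - by apply: divr_ge0; [apply: sumr_ge0 => j _|apply: ltW].
  - by apply: divr_ge0; apply: ltW.
  - by apply: ler_wpM2r => //; rewrite invr_ge0 ltW.
apply: (powR_le_cancel q0); [exact: exprn_ge0 | by apply: prodr_ge0 => j _; apply: ltW|].
rewrite powR_Xn // Gq powR_prod; last by move=> j; apply: ltW.
have -> : \prod_j lam j `^ q = (\prod_j (lam j `^ q)^-1)^-1 by rewrite prodfV invrK.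
rewrite -[k%:R / D]invf_div exprVn lef_pV2 ?posrE //; first by apply: exprn_gt0; apply: divr_gt0.
by apply: prodr_gt0 => j _; rewrite invr_gt0 powR_gt0.
Qed.

(* The exponent bookkeeping behind the constant C of the theorem: raising
   C k^((p-1)/(p+1)) / d0^(2(p-1)/(p+1)) to the power (p+1)/(p-1) gives
   k / D with D = d0^2 / (theta^(2/(p-1)) lam1 (1 - sigma^2)). *)
Lemma rate_constant_pow (p theta lam1 s d0 kn : R) :
  1 < p -> 0 < theta -> 0 < lam1 -> 0 < s -> 0 < d0 -> 0 <= kn ->
  (lam1 `^ ((p - 1) / (p + 1)) * theta `^ (2 / (p + 1)) * s `^ ((p - 1) / (p + 1))
     / d0 `^ (2 * (p - 1) / (p + 1)) * kn `^ ((p - 1) / (p + 1))) `^ ((p + 1) / (p - 1))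
  = kn / (d0 ^+ 2 / (theta `^ (2 / (p - 1)) * lam1 * s)).
Proof.
move=> p1 t0 l0 s0 d00 kn0.
set q := (p + 1) / (p - 1).
have nz : (p - 1 != 0) && (p + 1 != 0) by rewrite !gt_eqF //; lra.
have E1 : (p - 1) / (p + 1) * q = 1 by rewrite /q; field.
have E2 : 2 / (p + 1) * q = 2 / (p - 1) by rewrite /q; field.
have E3 : 2 * (p - 1) / (p + 1) * q = 2%:R by rewrite /q; field.
have root (x : R) : 0 <= x -> (x `^ ((p - 1) / (p + 1))) `^ q = x.
  by move=> x0; rewrite -powRrM E1 powRr1.
have pw (x e : R) : 0 <= x `^ e by exact: powR_ge0.
rewrite powRM ?mulr_ge0 ?divr_ge0 ?invr_ge0 ?pw //.
rewrite powRM ?mulr_ge0 ?invr_ge0 ?pw //.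
rewrite powRVx ?powR_gt0 // !powRM ?mulr_ge0 ?pw //.
rewrite !root ?(ltW l0) ?(ltW s0) //.
rewrite -!powRrM E2 E3 powR_mulrn ?(ltW d00) //.
by field; apply/and4P; split; rewrite gt_eqF ?powR_gt0.
Qed.

Lemma sum_inv_pow_le_of_large_steps (k : nat) (lam N : nat -> R) (sigma p theta d0 : R) :
  0 <= sigma < 1 -> 1 < p -> 0 < theta ->
  (forall j, 0 < lam j.+1) -> (forall j, 0 <= N j) ->
  (forall j, theta <= lam j.+1 * N j.+1 `^ (p - 1)) ->
  \sum_(j < k) lam 1%N / (2 * lam j.+2) * (1 - sigma ^+ 2) * N j.+2 ^+ 2 <= d0 ^+ 2 / 2 ->
  \sum_(j < k) (lam j.+2 `^ ((p + 1) / (p - 1)))^-1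
    <= d0 ^+ 2 / (theta `^ (2 / (p - 1)) * lam 1%N * (1 - sigma ^+ 2)).
Proof.
move=> /andP[s0 s1] p1 t0 l0 N0 hth hsum.
have ss : 0 < 1 - sigma ^+ 2 by nra.
have l1 := l0 0%N.
set w := theta `^ (2 / (p - 1)) * lam 1%N * (1 - sigma ^+ 2).
have w0 : 0 < w by rewrite /w !mulr_gt0 ?powR_gt0.
rewrite ler_pdivlMr // mulrC.
suff : w / 2 * \sum_(j < k) (lam j.+2 `^ ((p + 1) / (p - 1)))^-1 <= d0 ^+ 2 / 2 by lra.
rewrite mulr_sumr; apply: le_trans hsum; apply: ler_sum => j _.
have lj := l0 j.+1.
have := large_step_inv_pow p1 t0 lj (N0 _) (hth j.+1).
have -> : lam 1%N / (2 * lam j.+2) * (1 - sigma ^+ 2) * N j.+2 ^+ 2 =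
   (lam 1%N * (1 - sigma ^+ 2) / 2) * (N j.+2 ^+ 2 / lam j.+2).
  by field; rewrite gt_eqF.
rewrite /w => le_j.
set s := (lam j.+2 `^ _)^-1.
have -> : theta `^ (2 / (p - 1)) * lam 1%N * (1 - sigma ^+ 2) / 2 * s
  = (lam 1%N * (1 - sigma ^+ 2) / 2) * (theta `^ (2 / (p - 1)) * s) by ring.
by apply: ler_wpM2l => //; apply: divr_ge0; [apply: mulr_ge0|]; lra.
Qed.

Lemma growth_of_large_steps (k : nat) (lam N : nat -> R) (mu sigma p theta d0 : R) :
  (0 < k)%N -> 0 < mu -> 0 <= sigma < 1 -> 2 <= p -> 0 < theta -> 0 < d0 ->
  (forall j, 0 < lam j.+1) -> (forall j, 0 <= N j) ->
  (forall j, theta <= lam j.+1 * N j.+1 `^ (p - 1)) ->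
  \sum_(j < k) lam 1%N / (2 * lam j.+2) * (1 - sigma ^+ 2) * N j.+2 ^+ 2 <= d0 ^+ 2 / 2 ->
  (1 + 2 * mu * (lam 1%N `^ ((p - 1) / (p + 1)) * theta `^ (2 / (p + 1))
           * (1 - sigma ^+ 2) `^ ((p - 1) / (p + 1))) / d0 `^ (2 * (p - 1) / (p + 1))
    * k%:R `^ ((p - 1) / (p + 1))) ^+ k <= \prod_(j < k) (1 + 2 * mu * lam j.+2).
Proof.
move=> k0 m0 sigma_bnd p2 t0 d00 l0 N0 hth hsum.
have p1 : 1 < p by lra.
have sum_inv := sum_inv_pow_le_of_large_steps sigma_bnd p1 t0 l0 N0 hth hsum.
have [s0 s1] := andP sigma_bnd.
set q := (p + 1) / (p - 1) in sum_inv *.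
have q0 : 0 < q by apply: divr_gt0; lra.
have ss : 0 < 1 - sigma ^+ 2 by nra.
set D := d0 ^+ 2 / _ in sum_inv.
have D0 : 0 < D.
  by rewrite /D divr_gt0 ?exprn_gt0 // !mulr_gt0 ?powR_gt0 ?(l0 0%N).
set C := lam 1%N `^ _ * _ * _.
set G := C / d0 `^ (2 * (p - 1) / (p + 1)) * k%:R `^ ((p - 1) / (p + 1)).
have G0 : 0 <= G by rewrite /G /C !mulr_ge0 ?invr_ge0 ?powR_ge0.
have Gq : G `^ q = k%:R / D.
  by rewrite /G /C /q rate_constant_pow ?ler0n //; lra.
have prod_lam :=
  prod_ge_of_sum_inv_pow (lam := fun j => lam j.+2) k0 q0 D0 G0 (fun j => l0 j.+1) sum_inv Gq.
have -> : 2 * mu * C / d0 `^ (2 * (p - 1) / (p + 1)) * k%:R `^ ((p - 1) / (p + 1))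
          = 2 * mu * G by rewrite /G !mulrA.
apply: expn_le_prod_one_add => //.
- by move=> j; apply: mulr_ge0; [lra | apply: ltW].
- by apply: mulr_ge0 => //; lra.
- rewrite exprMn big_split /= prodr_const card_ord.
  by apply: ler_wpM2l; [apply: exprn_ge0; lra | exact: prod_lam].
Qed.

End RateInequalities.

Section Algorithm2.
Variables (R : realType) (n : nat) (f g : 'rV[R]_n -> \bar R) (mu : R).
Variables (xstar z : 'rV[R]_n) (sigma p theta : R) (lam A a : nat -> R).
Variables (x xt y v : nat -> 'rV[R]_n) (eps : nat -> R).
Hypothesis f_gt_ninfty : forall w, f w != -oo%E.
Hypothesis g_gt_ninfty : forall w, g w != -oo%E.
Hypothesis fg_fin_z : (f z + g z)%E \is a fin_num.
Hypothesis mu_gt0 : 0 < mu.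
Hypothesis g_strongly_convex : strongly_convex mu g.
Hypothesis xstar_min : forall w, (f xstar + g xstar <= f w + g w)%E.
Hypothesis alg : algorithm2 f g mu sigma p theta lam A a x xt y v eps.

Let alg_step := proj2 (proj2 (proj2 (proj2 alg))).

Lemma lam_gt0 j : 0 < lam j.+1.
Proof. by have [] := alg_step j. Qed.

Lemma large_step j : theta <= lam j.+1 * nrm (y j.+1 - xt j) `^ (p - 1).
Proof. by have [_ [_ [_ [_ [_ [_ [hth _]]]]]]] := alg_step j. Qed.

Lemma one_sub_sigma2_gt0 : 0 < 1 - sigma ^+ 2.
Proof. by have [/andP[s0 s1] _] := alg; nra. Qed.

Lemma A_ge0 j : 0 <= A j.
Proof.
elim: j => [|j IH]; first by have [_ [_ [_ [-> _]]]] := alg.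
have [lp [ea [_ [_ [_ [_ [_ [-> _]]]]]]]] := alg_step j.
by have [a0 _ _] := step_size_spec IH lp mu_gt0 ea; lra.
Qed.

Lemma A_one : A 1%N = lam 1%N.
Proof.
have [_ [_ [_ [A0 _]]]] := alg.
have [lp [-> [_ [_ [_ [_ [_ [-> _]]]]]]]] := alg_step 0%N.
rewrite A0 add0r.
have -> : (1 + 2 * mu * 0) ^+ 2 * lam 1%N ^+ 2 + 4 * (1 + mu * 0) * 0 * lam 1%N
          = lam 1%N ^+ 2 by ring.
by rewrite sqrtr_sqr ger0_norm ?(ltW lp) //; field.
Qed.

(* Since a_{j+1} >= (1 + 2 mu A_j) lam_{j+1}, the aggregate A grows geometrically. *)
Lemma A_growth j : A j * (1 + 2 * mu * lam j.+1) <= A j.+1.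
Proof.
have [lp [ea [_ [_ [_ [_ [_ [-> _]]]]]]]] := alg_step j.
by have [_ _ aB] := step_size_spec (A_ge0 j) lp mu_gt0 ea; have := A_ge0 j; lra.
Qed.

Lemma lam1_le_A j : lam 1%N <= A j.+1.
Proof.
elim: j => [|j IH]; first by rewrite A_one.
apply: le_trans (A_growth j.+1).
have := mulr_ge0 (mulr_ge0 (A_ge0 j.+1) (ltW mu_gt0)) (ltW (lam_gt0 j.+1)); lra.
Qed.

Lemma A_ge_prod k : lam 1%N * \prod_(j < k) (1 + 2 * mu * lam j.+2) <= A k.+1.
Proof.
elim: k => [|k IH]; first by rewrite big_ord0 mulr1 A_one.
rewrite big_ord_recr /= mulrA; apply: le_trans (A_growth k.+1).
apply: ler_wpM2r => //.
by have := mulr_ge0 (ltW mu_gt0) (ltW (lam_gt0 k.+1)); lra.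
Qed.

(* Values of h = f + g, read in R at points where f and g are finite. *)
Let hval w := fine (f w) + fine (g w).

Lemma fin_num_iterate j : f (y j.+1) \is a fin_num /\ g (y j.+1) \is a fin_num.
Proof.
have [fz gz] : f z \is a fin_num /\ g z \is a fin_num.
  by move: fg_fin_z; rewrite fin_numD => /andP[].
have [_ [_ [_ [[u1 [u2 [_ [h1 h2]]]] _]]]] := alg_step j.
by split; [exact: fin_num_of_eps_subdiff f_gt_ninfty h1 fz
          | exact: fin_num_of_eps_subdiff g_gt_ninfty h2 gz].
Qed.

Lemma fin_num_xstar : f xstar \is a fin_num /\ g xstar \is a fin_num.
Proof. exact: fin_num_of_sum_le (f_gt_ninfty _) (g_gt_ninfty _) (xstar_min z) fg_fin_z. Qed.

Lemma hval_xstar_le j : hval xstar <= hval (y j.+1).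
Proof.
have [fxs gxs] := fin_num_xstar; have [fy gy] := fin_num_iterate j.
have := xstar_min (y j.+1).
by rewrite -(fineK fxs) -(fineK gxs) -(fineK fy) -(fineK gy) /= -!EFinD lee_fin.
Qed.

Lemma subgrad_ineq j w : f w \is a fin_num -> g w \is a fin_num ->
  hval (y j.+1) + ip (v j.+1) (w - y j.+1) - eps j.+1
    + mu / 2 * nrm (w - y j.+1) ^+ 2 <= hval w.
Proof.
move=> fw gw; have [_ [_ [_ [[u1 [u2 [-> [h1 h2]]]] _]]]] := alg_step j.
have [fy gy] := fin_num_iterate j.
have := eps_subdiff_fine h1 fw fy; have := strong_subgrad_ineq g_strongly_convex h2 gw gy.
by rewrite /hval ipDl; lra.
Qed.

Let potential j := A j * (hval (y j) - hval xstar)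
                   + (1 + mu * A j) / 2 * nrm (x j - xstar) ^+ 2.
Let decrease j := A j.+1 / (2 * lam j.+1) * (1 - sigma ^+ 2) * nrm (y j.+1 - xt j) ^+ 2.

Lemma decrease_ge0 j : 0 <= decrease j.
Proof.
rewrite /decrease; have := one_sub_sigma2_gt0; have := lam_gt0 j => lp s2.
apply: mulr_ge0; last exact: sqr_ge0.
by apply: mulr_ge0; first apply: divr_ge0; [exact: A_ge0 | lra | lra].
Qed.

Lemma potential_ge0 j : 0 <= potential j.+1.
Proof.
have hle := hval_xstar_le j; have mA := mulr_ge0 (ltW mu_gt0) (A_ge0 j.+1).
rewrite /potential addr_ge0 // mulr_ge0 ?sqr_ge0 ?A_ge0 //; lra.
Qed.

(* One iteration decreases the potential by at least decrease j: the
   subgradient inequalities at y_j (weight A_j) and at xstar (weight a_{j+1})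
   are added to estimate_sequence_step and to the relative-error criterion. *)
Lemma potential_decrease j : potential j.+1 + decrease j <= potential j.
Proof.
have [lp [ea [ext [_ [_ [err [_ [eA exn]]]]]]]] := alg_step j.
have [a0 ha _] := step_size_spec (A_ge0 j) lp mu_gt0 ea.
have [fxs gxs] := fin_num_xstar.
have at_xstar := ler_wpM2l (ltW a0) (subgrad_ineq j fxs gxs).
have at_prev : A j * (hval (y j.+1) - hval xstar + ip (v j.+1) (y j - y j.+1) - eps j.+1
               + mu / 2 * nrm (y j - y j.+1) ^+ 2) <= A j * (hval (y j) - hval xstar).
  case: j {ea ext exn eA err lp a0 ha at_xstar} => [|j].
    by have [_ [_ [_ [-> _]]]] := alg; rewrite !mul0r.
  have [fy gy] := fin_num_iterate j.
  have := subgrad_ineq j.+1 fy gy.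
  by move=> hle; apply: ler_wpM2l; [exact: A_ge0 | lra].
rewrite eA in exn.
have step := estimate_sequence_step xstar lp mu_gt0 (A_ge0 j) a0 ha ext exn.
have w0 : 0 <= (A j + a j.+1) / (2 * lam j.+1).
  by apply: divr_ge0; [have := A_ge0 j; lra | lra].
have err_scaled := ler_wpM2l w0 err.
have e2 : (A j + a j.+1) / (2 * lam j.+1) * (2 * lam j.+1 * eps j.+1)
          = (A j + a j.+1) * eps j.+1 by field; rewrite gt_eqF.
rewrite mulrDr e2 in err_scaled.
rewrite /potential /decrease eA.
lra.
Qed.

(* Telescoping the potential: P_0 = d0^2/2 bounds the total decrease. *)
Lemma sum_decrease_le k : \sum_(j < k) decrease j.+1 <= nrm (x 0%N - xstar) ^+ 2 / 2.
Proof.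
have tel m : \sum_(j < m) decrease j <= potential 0%N - potential m.
  elim: m => [|m IH]; first by rewrite big_ord0 subrr.
  by rewrite big_ord_recr /=; have := potential_decrease m; lra.
have P0 : potential 0%N = nrm (x 0%N - xstar) ^+ 2 / 2.
  by have [_ [_ [_ [A0 _]]]] := alg; rewrite /potential A0; ring.
have := tel k.+1; rewrite big_ord_recl /= P0.
by have := potential_ge0 k; have := decrease_ge0 0%N; lra.
Qed.

Lemma weighted_sum_le k :
  \sum_(j < k) lam 1%N / (2 * lam j.+2) * (1 - sigma ^+ 2) * nrm (y j.+2 - xt j.+1) ^+ 2
    <= nrm (x 0%N - xstar) ^+ 2 / 2.
Proof.
apply: le_trans (sum_decrease_le k); apply: ler_sum => j _.
have := one_sub_sigma2_gt0; have := lam_gt0 j.+1 => lp ss.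
apply: ler_wpM2r; first exact: sqr_ge0.
apply: ler_wpM2r; first lra.
by apply: ler_wpM2r; [rewrite invr_ge0; lra | exact: lam1_le_A].
Qed.

End Algorithm2.

Theorem lemma3p2 (R : realType) (n : nat) (f g : 'rV[R]_n -> \bar R) (mu : R)
  (xstar : 'rV[R]_n) (sigma p theta : R) (lam A a : nat -> R)
  (x xt y v : nat -> 'rV[R]_n) (eps : nat -> R) :
  proper_fun f -> closed_fun f -> convex_fun f ->
  proper_fun g -> closed_fun g -> convex_fun g ->
  (exists z, (f z + g z)%E \is a fin_num) ->
  0 < mu -> strongly_convex mu g ->
  (forall z, (f xstar + g xstar <= f z + g z)%E) ->
  algorithm2 f g mu sigma p theta lam A a x xt y v eps ->
  0 < nrm (x 0%N - xstar) ->
  let d0 := nrm (x 0%N - xstar) in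
  let C := lam 1%N `^ ((p - 1) / (p + 1)) * theta `^ (2 / (p + 1))
           * (1 - sigma ^+ 2) `^ ((p - 1) / (p + 1)) in
  forall k : nat,
    A k.+1 >= lam 1%N * (1 + 2 * mu * C / d0 `^ (2 * (p - 1) / (p + 1))
                              * k%:R `^ ((p - 1) / (p + 1))) ^+ k.
(* A_{k+1} >= lam_1 prod_j (1 + 2 mu lam_{j+2}) (A_ge_prod), and the product
   grows at the claimed rate (growth_of_large_steps) thanks to the large-step
   condition and the telescoped potential bound (weighted_sum_le). *)
Proof.
move=> pf _ _ pg _ _ [z fg_fin] mu_gt0 g_sc xstar_min alg d0_gt0 d0 C k.
have [sigma_bnd [p_ge2 [theta_gt0 _]]] := alg.
case: k => [|k]; first by rewrite expr0 mulr1 (A_one alg).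
apply: le_trans (A_ge_prod mu_gt0 alg k.+1).
apply: ler_wpM2l; first exact: ltW (lam_gt0 alg 0).
apply: (growth_of_large_steps (N := fun j => nrm (y j - xt j.-1))) => //.
- exact: lam_gt0 alg.
- by move=> j; exact: nrm_ge0.
- exact: large_step alg.
- exact: weighted_sum_le pf.1 pg.1 fg_fin mu_gt0 g_sc xstar_min alg k.+1.
Qed.
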